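(* In the allocation problem described in the context, let $\pi=(\pi_1,\ldots,\pi_n)$ be the agents' preference lists and let $a$ be a Pareto efficient allocation. Then there exist speed functions $\eta_1,\ldots,\eta_n$ such that the extended SG mechanism with these speeds and truthful bids $\pi$ produces exactly the allocation $a$.
   Context: There are $m$ distinct divisible goods; good $j$ is available in amount $q_j>0$. There are $n$ agents; agent $i$ is to receive a total of $r_i>0$, with $\sum_j q_j=\sum_i r_i$. An allocation is a family $a_{ij}\ge 0$ with $\sum_j a_{ij}=r_i$ and $\sum_i a_{ij}=q_j$; $a_{i*}=(a_{i1},\ldots,a_{im})$ is agent $i$'s share. Each agent $i$ has a preference list $\pi_i$, a permutation of the goods ($\pi_i(1)$ most preferred). Agent $i$ prefers $a_{i*}$ to $b_{i*}$, written $a_{i*}>_i b_{i*}$, if the leftmost nonzero coordinate of $(a_{i\pi_i(\ell)}-b_{i\pi_i(\ell)})_{\ell=1}^m$ is positive. An allocation $a$ is Pareto efficient if there is no allocation $b$ such that every agent $i$ has $b_{i*}=a_{i*}$ or $b_{i*}>_i a_{i*}$, and some agent $i$ has $b_{i*}>_i a_{i*}$. A speed function for agent $i$ is a nonnegative integrable function $\eta_i:[0,1]\to\mathbb{R}_{\ge 0}$ with $\int_0^1\eta_i(t)\,dt=r_i$. The extended SG mechanism with speeds $\eta_1,\ldots,\eta_n$: each agent $i$ bids a permutation $\sigma_i$ of the goods; over time $t\in[0,1]$, each agent $i$ receives, at rate $\eta_i(t)$, the good highest in $\sigma_i$ among those not yet exhausted (a good is exhausted when the total amount handed out equals $q_j$;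 several agents may receive a good simultaneously; upon exhaustion, agents receiving it switch to their next non-exhausted good). The resulting allocation records the total amount of each good each agent receives. *)

From HB Require Import structures.
From mathcomp Require Import all_boot all_order all_algebra all_fingroup.
From mathcomp Require Import all_classical all_reals all_analysis.
Set Implicit Arguments. Unset Strict Implicit. Unset Printing Implicit Defensive.
Import Order.TTheory GRing.Theory Num.Theory.
Local Open Scope classical_set_scope.
Local Open Scope ring_scope.

Section SG.
Variable R : realType.
Variables n m : nat.
(* agents are 'I_n, goods are 'I_m.
   A preference list / bid is a permutation s : {perm 'I_m}; s k is the good
   of rank k (rank 0 = most preferred). *)

Definition is_allocation (q : 'I_m -> R) (r : 'I_n -> R)
    (a : 'I_n -> 'I_m -> R) : Prop :=
  [/\ forall i j, 0 <= a i j,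
      forall i, \sum_(j < m) a i j = r i &
      forall j, \sum_(i < n) a i j = q j].

Definition lex_prefers (p : {perm 'I_m}) (x y : 'I_m -> R) : Prop :=
  exists l : 'I_m,
    (forall k : 'I_m, (k < l)%N -> x (p k) = y (p k)) /\ y (p l) < x (p l).

Definition pareto_efficient (q : 'I_m -> R) (r : 'I_n -> R)
    (pi : 'I_n -> {perm 'I_m}) (a : 'I_n -> 'I_m -> R) : Prop :=
  is_allocation q r a /\
  ~ (exists b : 'I_n -> 'I_m -> R,
       [/\ is_allocation q r b,
           forall i, (forall j, b i j = a i j) \/ lex_prefers (pi i) (b i) (a i) &
           exists i, lex_prefers (pi i) (b i) (a i)]).

Definition I01 : set R := [set` `[(0:R), 1]].
Definition I0t (t : R) : set R := [set` `[(0:R), t]].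

Definition speed_function (ri : R) (eta : R -> R) : Prop :=
  [/\ forall t, t \in `[0, 1] -> 0 <= eta t,
      (@lebesgue_measure R).-integrable I01 (EFin \o eta) &
      (\int[@lebesgue_measure R]_(t in I01) (eta t)%:E = ri%:E)%E].

(* c i j t = cumulative amount of good j received by agent i up to time t *)
Definition not_exhausted (q : 'I_m -> R) (c : 'I_n -> 'I_m -> R -> R)
    (j : 'I_m) (t : R) : bool :=
  \sum_(k < n) c k j t < q j.

Definition receives (q : 'I_m -> R) (c : 'I_n -> 'I_m -> R -> R)
    (s : {perm 'I_m}) (j : 'I_m) (t : R) : bool :=
  not_exhausted q c j t &&
  [forall k : 'I_m, not_exhausted q c k t ==> ((s^-1)%g j <= (s^-1)%g k)%N].

Definition SG_run (q : 'I_m -> R) (eta : 'I_n -> R -> R)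
    (sigma : 'I_n -> {perm 'I_m}) (c : 'I_n -> 'I_m -> R -> R) : Prop :=
  forall i j,
    (@lebesgue_measure R).-integrable I01
       (fun s => (eta i s * (receives q c (sigma i) j s)%:R)%:E) /\
    forall t, t \in `[0, 1] ->
      ((c i j t)%:E =
         \int[@lebesgue_measure R]_(s in I0t t)
            (eta i s * (receives q c (sigma i) j s)%:R)%:E)%E.

Definition SG_outcome (q : 'I_m -> R) (eta : 'I_n -> R -> R)
    (sigma : 'I_n -> {perm 'I_m}) (a : 'I_n -> 'I_m -> R) : Prop :=
  exists c : 'I_n -> 'I_m -> R -> R,
    SG_run q eta sigma c /\ forall i j, a i j = c i j 1.

End SG.

From HB Require Import structures.
From mathcomp Require Import all_boot all_order all_algebra all_fingroup.
From mathcomp Require Import all_classical all_reals all_analysis.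
From mathcomp Require Import lra measurable_realfun.
Import Order.TTheory GRing.Theory Num.Theory.
Local Open Scope ring_scope.

(* Say that g' is an upgrade of g when some agent holding a positive amount of g
   strictly prefers g'.  For a Pareto efficient allocation upgrades are acyclic:
   along a cycle of upgrades every holder could hand over a small amount eps of
   its good in exchange for eps of the next one; the trade is still an
   allocation and makes each participant lexicographically better off.  So the
   goods can be layered, layer g being the number of goods reachable from g by
   upgrades, with every upgrade in a strictly lower layer.  With N > layers,
   layer k is served during [k/N, (k+1)/N), each agent eating each good g of
   the layer at rate N a_ig: the goods of the layer are exhausted exactly at the
   end of the slot, and a holder of g finds every good it prefers to g already
   exhausted, so truthful bidding yields a. *)


Definition pref_rank {m : nat} (p : {perm 'I_m}) (g : 'I_m) : nat := (p^-1)%g g.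

Lemma pref_rank_perm (m : nat) (p : {perm 'I_m}) (k : 'I_m) : pref_rank p (p k) = k.
Proof. by rewrite /pref_rank permK. Qed.

Lemma sumr_and_eq (R : realType) (I : finType) (b : bool) (x : I) :
  \sum_(i : I) (b && (x == i))%:R = b%:R :> R.
Proof.
rewrite (bigD1 x) //= eqxx andbT big1 ?addr0 // => i /negbTE.
by rewrite eq_sym => ->; rewrite andbF.
Qed.

Lemma pref_rank_inj (m : nat) (p : {perm 'I_m}) : injective (pref_rank p).
Proof. by move=> g g' /val_inj/perm_inj. Qed.

Section TradingCycle.
Context {R : realType} {n m : nat} {q : 'I_m -> R} {r : 'I_n -> R}.
Variables (pi : 'I_n -> {perm 'I_m}) (a : 'I_n -> 'I_m -> R).
Context {c : seq 'I_m} {w : 'I_m -> 'I_n} {eps : R}.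
Hypotheses (a_alloc : is_allocation q r a) (c_uniq : uniq c) (eps_gt0 : 0 < eps).
Hypothesis w_holds : forall g, g \in c -> eps <= a (w g) g.
Hypothesis w_upgrades : forall g, g \in c ->
  (pref_rank (pi (w g)) (next c g) < pref_rank (pi (w g)) g)%N.

(* Agent [w g] hands over [eps] of [g] and receives [eps] of [next c g]. *)
Let gives i g : R := ((g \in c) && (w g == i))%:R.
Let gets i g : R := ((g \in c) && (w (prev c g) == i))%:R.

Definition cycle_trade i g : R := a i g + eps * (gets i g - gives i g).

Lemma cycle_trade_ge0 i g : 0 <= cycle_trade i g.
Proof.
have [a_ge0 _ _] := a_alloc.
have gets_ge0 j : 0 <= eps * gets j g := mulr_ge0 (ltW eps_gt0) (ler0n _ _).
rewrite /cycle_trade mulrBr addrA subr_ge0 /gives.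
case: (boolP ((g \in c) && (w g == i))) => [/andP[gc /eqP <-]|_] /=.
  by rewrite mulr1; apply: le_trans (w_holds _ gc) _; rewrite lerDl.
by rewrite mulr0n mulr0 addr_ge0.
Qed.

Lemma sum_gets i : \sum_g gets i g = \sum_g gives i g.
Proof.
rewrite (reindex_inj (can_inj (prev_next c_uniq))).
by apply: eq_bigr => g _; rewrite /gets mem_next prev_next.
Qed.

Lemma cycle_trade_allocation : is_allocation q r cycle_trade.
Proof.
have [_ a_row a_col] := a_alloc.
split=> [i g|i|g]; first exact: cycle_trade_ge0.
  by rewrite big_split /= -mulr_sumr sumrB sum_gets subrr mulr0 addr0 a_row.
by rewrite big_split /= -mulr_sumr sumrB !sumr_and_eq subrr mulr0 addr0 a_col.
Qed.

Lemma cycle_trade_outsider i :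
  (forall g, g \in c -> w g != i) -> forall g, cycle_trade i g = a i g.
Proof.
move=> not_w g; rewrite /cycle_trade /gets /gives.
have [gc|_] := boolP (g \in c); last by rewrite subrr mulr0 addr0.
by rewrite (negbTE (not_w _ gc)) (negbTE (not_w _ _)) ?mem_prev // subrr mulr0 addr0.
Qed.

(* The lexicographic gain happens at the best good that [i] receives, which
   [i] prefers to every good it gives away. *)
Lemma cycle_trade_participant i g0 :
  g0 \in c -> w g0 = i -> lex_prefers (pi i) (cycle_trade i) (a i).
Proof.
move=> g0c wg0.
pose receives_from x := (x \in c) && (w (prev c x) == i).
have recv0 : receives_from (next c g0).
  by rewrite /receives_from mem_next g0c prev_next // wg0 eqxx.
case: (arg_minnP (pref_rank (pi i)) recv0) => x recv_x x_min.
have gives0 y : (pref_rank (pi i) y <= pref_rank (pi i) x)%N -> gives i y = 0.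
  rewrite /gives; case: (boolP (_ && _)) => // /andP[yc /eqP wy] le_yx.
  have recv_next : receives_from (next c y).
    by rewrite /receives_from mem_next yc prev_next // wy eqxx.
  have lt_next : (pref_rank (pi i) (next c y) < pref_rank (pi i) y)%N.
    by rewrite -wy w_upgrades.
  by have := leq_ltn_trans (x_min _ recv_next) (leq_trans lt_next le_yx); rewrite ltnn.
exists ((pi i)^-1 x)%g; split=> [k lt_kx|].
  rewrite /cycle_trade gives0 ?pref_rank_perm; last exact: ltnW.
  rewrite /gets; case: (boolP (_ && _)) => [recv_k|_]; first last.
    by rewrite subrr mulr0 addr0.
  by have := x_min _ recv_k; rewrite pref_rank_perm leqNgt lt_kx.
move: recv_x; rewrite permKV /cycle_trade gives0 // /gets /receives_from => ->.
by rewrite subr0 mulr1 ltrDl.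
Qed.

Lemma cycle_trade_improves :
  c != [::] ->
  exists b : 'I_n -> 'I_m -> R,
    [/\ is_allocation q r b,
        forall i, (forall j, b i j = a i j) \/ lex_prefers (pi i) (b i) (a i) &
        exists i, lex_prefers (pi i) (b i) (a i)].
Proof.
move=> c_nil; have [g0 g0c] : exists g0, g0 \in c.
  by case: c c_nil => // g0 c' _; exists g0; rewrite mem_head.
exists cycle_trade; split; first exact: cycle_trade_allocation.
  move=> i; have [|] := boolP [exists g, (g \in c) && (w g == i)].
    by case/existsP=> g /andP[gc /eqP wg]; right; exact: cycle_trade_participant wg.
  move=> no_g; left; apply: cycle_trade_outsider => g gc.
  by apply: contraNneq no_g => wg; apply/existsP; exists g; rewrite gc wg eqxx.
by exists (w g0); exact: cycle_trade_participant g0c _.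
Qed.

End TradingCycle.

Section UpgradeLayers.
Context {R : realType} {n m : nat} {q : 'I_m -> R} {r : 'I_n -> R}.
Variables (pi : 'I_n -> {perm 'I_m}) (a : 'I_n -> 'I_m -> R).
Hypothesis a_pareto : pareto_efficient q r pi a.

Definition upgrade : rel 'I_m := fun g g' =>
  [exists i, (0 < a i g) && (pref_rank (pi i) g' < pref_rank (pi i) g)%N].

Lemma pareto_upgrade_acyclic g g' : connect upgrade g g' -> ~~ upgrade g' g.
Proof.
case: a_pareto => a_alloc no_improvement.
move=> /connectP[p up_p ->]; apply/negP.
case/shortenP: up_p => c up_c c_uniq _ up_back.
have C_cycle : path.cycle upgrade (g :: c) by rewrite /= rcons_path up_c.
have [i0 _] : exists i0 : 'I_n, true by case/existsP: up_back => i _; exists i.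
have /fin_all_exists[w w_up] x : exists i, x \in g :: c ->
    (0 < a i x) && (pref_rank (pi i) (next (g :: c) x) < pref_rank (pi i) x)%N.
  case: (boolP (x \in g :: c)) => [xC|_]; last by exists i0.
  by case/existsP: (next_cycle C_cycle xC) => i up_i; exists i.
pose eps := \big[Num.min/1]_(x | x \in g :: c) a (w x) x.
have eps_gt0 : 0 < eps.
  rewrite /eps; elim/big_rec: _ => // x e xC e_gt0.
  by rewrite lt_min e_gt0 andbT; case/andP: (w_up x xC).
have eps_le x : x \in g :: c -> eps <= a (w x) x.
  by move=> xC; rewrite /eps (bigD1 x) //= ge_min lexx.
apply: no_improvement; apply: (cycle_trade_improves pi a a_alloc c_uniq eps_gt0 eps_le) => //.
by move=> x /w_up/andP[].
Qed.

Definition upgrade_layer (g : 'I_m) : nat := #|[set x | connect upgrade g x]|.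

Lemma upgrade_layer_lt g : (upgrade_layer g < m.+1)%N.
Proof. by rewrite ltnS -[X in (_ <= X)%N](card_ord m) max_card. Qed.

Lemma upgrade_layer_decreasing i g g' : 0 < a i g ->
  (pref_rank (pi i) g' < pref_rank (pi i) g)%N -> (upgrade_layer g' < upgrade_layer g)%N.
Proof.
move=> a_ig lt_g'g; have up : upgrade g g' by apply/existsP; exists i; rewrite a_ig.
apply: proper_card; apply/properP; split.
  by apply/fintype.subsetP => x; rewrite !inE; apply: connect_trans (connect1 up).
exists g; rewrite !inE ?connect0 //.
exact: contraL (@pareto_upgrade_acyclic g' g) up.
Qed.

End UpgradeLayers.

Section IndicatorIntegral.
Context {R : realType}.
Local Open Scope classical_set_scope.
Local Open Scope ring_scope.

Lemma lebesgue_measure_itv_co_cc (u v t : R) : 0 <= u -> u <= v -> 0 <= t ->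
  (@lebesgue_measure R) ([set` `[u, v[] `&` I0t t) = (Num.min (Num.max t u) v - u)%:E.
Proof.
move=> u_ge0 le_uv t_ge0; rewrite /I0t.
have itv_len x : u <= x -> (if u < x then (x%:E + (- u)%:E)%E else 0) = (x - u)%:E.
  by rewrite le_eqVlt => /predU1P[<-|->]; rewrite ?ltxx ?subrr // -EFinD.
(* Besides splitting cases, [ltP] rewrites the [Num.max]/[Num.min] of the goal. *)
have [lt_tu|le_ut] := ltP t u.
  rewrite (_ : _ `&` _ = set0) ?measure0 ?min_l ?subrr //.
  by apply/seteqP; split => x //= []; rewrite !in_itv /= => /andP[ux _] /andP[_ xt]; lra.
have [lt_tv|le_vt] := ltP t v.
  rewrite (_ : _ `&` _ = [set` `[u, t]]); last first.
    apply/seteqP; split => x /=; rewrite !in_itv /=; first by case=> /andP[-> _] /andP[_ ->].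
    by move=> /andP[ux xt]; split; apply/andP; split => //; lra.
  by rewrite lebesgue_measure_itv /= lte_fin itv_len.
rewrite (_ : _ `&` _ = [set` `[u, v[]); last first.
  apply/seteqP; split => x /=; rewrite !in_itv /=; first by case.
  by move=> /andP[ux xv]; split; apply/andP; split => //; lra.
by rewrite lebesgue_measure_itv /= lte_fin itv_len.
Qed.

Lemma integrable_scaled_indic_itv (k u v t : R) :
  (@lebesgue_measure R).-integrable (I0t t) (fun s => (k * \1_[set` `[u, v[] s)%:E).
Proof.
suff : (@lebesgue_measure R).-integrable (I0t t) (EFin \o (fun s => k * \1_[set` `[u, v[] s)) by [].
apply: measurable_bounded_integrable.
- exact: measurable_itv.
- by have /= -> := @lebesgue_measure_itv R `[0, t]; case: ifP => _; rewrite ?ltry.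
- by apply: measurable_funM; [exact: measurable_cst|apply: measurable_indic; exact: measurable_itv].
exists `|k|; split; first exact: num_real.
move=> M lt_kM s _ /=; rewrite normrM (le_trans _ (ltW lt_kM)) //.
by rewrite -[leRHS]mulr1 ler_wpM2l // indicE; case: (_ \in _); rewrite ?normr1 ?normr0.
Qed.

Lemma integral_scaled_indic_itv (k u v t : R) : 0 <= u -> u <= v -> 0 <= t ->
  (\int[@lebesgue_measure R]_(s in I0t t) (k * \1_[set` `[u, v[] s)%:E =
   (k * (Num.min (Num.max t u) v - u))%:E)%E.
Proof.
move=> u_ge0 le_uv t_ge0.
have int_indic : (@lebesgue_measure R).-integrable (I0t t) (fun s => (\1_[set` `[u, v[] s)%:E).
  apply: (eq_integrable _ _ _ _ (integrable_scaled_indic_itv 1 u v t)) => [|s _].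
    exact: measurable_itv.
  by rewrite mul1r.
under eq_integral do rewrite EFinM.
rewrite integralZl //; last exact: measurable_itv.
rewrite integral_indic //; last exact: measurable_itv.
by move: (lebesgue_measure_itv_co_cc u v t u_ge0 le_uv t_ge0) => /= ->; rewrite -EFinM.
Qed.

End IndicatorIntegral.

Section LayeredSchedule.
Context {R : realType} {n m : nat} {q : 'I_m -> R} {r : 'I_n -> R}.
Variables (N : nat) (pi : 'I_n -> {perm 'I_m}) (a : 'I_n -> 'I_m -> R) (L : 'I_m -> nat).
Hypotheses (q_gt0 : forall g, 0 < q g) (a_alloc : is_allocation q r a).
Hypotheses (N_gt0 : (0 < N)%N) (L_lt : forall g, (L g < N)%N).
Hypothesis L_upgrade : forall i g g', 0 < a i g ->
  (pref_rank (pi i) g' < pref_rank (pi i) g)%N -> (L g' < L g)%N.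
Local Open Scope classical_set_scope.
Local Open Scope ring_scope.

Definition slot_start g : R := (L g)%:R / N%:R.
Definition slot_end g : R := (L g).+1%:R / N%:R.
Definition slot g : set R := [set` `[slot_start g, slot_end g[].
Definition eat_rate i g : R := N%:R * a i g.
Definition slot_speed i s : R := \sum_g eat_rate i g * \1_(slot g) s.
Definition slot_consumption i g t : R :=
  eat_rate i g * (Num.min (Num.max t (slot_start g)) (slot_end g) - slot_start g).

Let N_gt0R : 0 < N%:R :> R. Proof. by rewrite ltr0n. Qed.

Lemma slot_start_ge0 g : 0 <= slot_start g.
Proof. by rewrite divr_ge0 ?ler0n. Qed.

Lemma slot_start_lt_end g : slot_start g < slot_end g.
Proof. by rewrite ltr_pM2r ?invr_gt0 // ltr_nat. Qed.

Lemma slot_end_le1 g : slot_end g <= 1.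
Proof. by rewrite ler_pdivrMr // mul1r ler_nat. Qed.

Lemma slot_length g : N%:R * (slot_end g - slot_start g) = 1.
Proof. by rewrite -mulrBl -natrB // subSnn mulr1n mul1r mulfV ?gt_eqF. Qed.

Lemma mem_slot g s : (s \in slot g) = ((L g)%:R <= N%:R * s < (L g).+1%:R).
Proof.
by rewrite mem_setE in_itv /= ler_pdivrMr // ltr_pdivlMr // ![s * _]mulrC.
Qed.

Lemma slot_consumption1 i g : slot_consumption i g 1 = a i g.
Proof.
rewrite /slot_consumption max_l; last exact: le_trans (ltW (slot_start_lt_end g)) (slot_end_le1 g).
by rewrite min_r ?slot_end_le1 // /eat_rate mulrAC slot_length mul1r.
Qed.

Lemma not_exhausted_slot g s :
  not_exhausted q slot_consumption g s = (N%:R * s < (L g).+1%:R).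
Proof.
have [_ _ a_col] := a_alloc.
rewrite /not_exhausted /slot_consumption /eat_rate.
under eq_bigr do rewrite mulrAC.
rewrite -mulr_sumr a_col mulrC -[ltRHS]mulr1 ltr_pM2l // -[X in _ < X = _](slot_length g) ltr_pM2l //.
rewrite ltrD2r gt_min ltxx orbF gt_max slot_start_lt_end andbT.
by rewrite /slot_end ltr_pdivlMr // mulrC.
Qed.

Lemma exhausted_before_slot g g' s : (L g < L g')%N -> s \in slot g' ->
  ~~ not_exhausted q slot_consumption g s.
Proof.
move=> lt_gg'; rewrite mem_slot not_exhausted_slot -leNgt => /andP[le_g's _].
by apply: le_trans le_g's; rewrite ler_nat.
Qed.

Lemma receives_in_slot i j s : 0 < a i j -> s \in slot j ->
  receives q slot_consumption (pi i) j s.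
Proof.
move=> a_ij s_j; apply/andP; split.
  by move: s_j; rewrite mem_slot not_exhausted_slot => /andP[].
apply/forallP => k; apply/implyP => ne_k; rewrite leqNgt; apply/negP => lt_kj.
by move: ne_k; apply/negP; apply: exhausted_before_slot s_j; exact: L_upgrade a_ij lt_kj.
Qed.

Lemma receives_slot_unique i j h s : receives q slot_consumption (pi i) j s ->
  0 < a i h -> s \in slot h -> h = j.
Proof.
case/andP=> ne_j /forallP first_j a_ih s_h.
have le_jh : (pref_rank (pi i) j <= pref_rank (pi i) h)%N.
  by apply: (implyP (first_j h)); move: s_h; rewrite mem_slot not_exhausted_slot => /andP[].
apply: contraTeq ne_j => neq_hj; apply: (@exhausted_before_slot j h s _ s_h).
apply: L_upgrade a_ih _.
by rewrite ltn_neqAle (inj_eq (@pref_rank_inj _ _)) eq_sym neq_hj.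
Qed.

Lemma slot_speed_receives i j s :
  slot_speed i s * (receives q slot_consumption (pi i) j s)%:R = eat_rate i j * \1_(slot j) s.
Proof.
have [a_ge0 _ _] := a_alloc.
have a_cases h : a i h = 0 \/ 0 < a i h.
  by case: (eqVneq (a i h) 0) => [|a_neq0]; [left|right; rewrite lt_def a_neq0 a_ge0].
have [recv|not_recv] := boolP (receives _ _ _ j s).
  rewrite mulr1 /slot_speed (bigD1 j) //= big1 ?addr0 // => h neq_hj.
  case: (a_cases h) => [a_ih0|a_ih]; first by rewrite /eat_rate a_ih0 mulr0 mul0r.
  rewrite indicE; case: (boolP (s \in slot h)) => [s_h|]; last by rewrite mulr0.
  by move: neq_hj; rewrite (@receives_slot_unique i j h s recv a_ih s_h) eqxx.
rewrite mulr0 indicE; case: (a_cases j) => [a_ij0|a_ij]; first by rewrite /eat_rate a_ij0 mulr0 mul0r.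
case: (boolP (s \in slot j)) => [s_j|]; last by rewrite mulr0.
by move: not_recv; rewrite receives_in_slot.
Qed.

Lemma slot_consumption_integral i j t : 0 <= t ->
  (\int[@lebesgue_measure R]_(s in I0t t) (eat_rate i j * \1_(slot j) s)%:E =
   (slot_consumption i j t)%:E)%E.
Proof.
move=> t_ge0; apply: integral_scaled_indic_itv => //.
  exact: slot_start_ge0.
exact: ltW (slot_start_lt_end j).
Qed.

Lemma slot_speed_function i : speed_function (r i) (slot_speed i).
Proof.
have [a_ge0 a_row _] := a_alloc.
have int_eat (g : 'I_m) : (@lebesgue_measure R).-integrable (@I01 R)
    (fun s => (eat_rate i g * \1_(slot g) s)%:E).
  exact: integrable_scaled_indic_itv.
have sum_eat s : (slot_speed i s)%:E = (\sum_g (eat_rate i g * \1_(slot g) s)%:E)%E.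
  by rewrite sumEFin.
split.
- move=> t _; apply: sumr_ge0 => g _.
  by rewrite mulr_ge0 ?indicE ?ler0n // mulr_ge0 ?ler0n.
- have := @integrable_sum _ _ R (@lebesgue_measure R) (@I01 R) (measurable_itv _) _
    (index_enum 'I_m) predT _ (fun g _ => int_eat g).
  apply: eq_integrable; first exact: measurable_itv.
  by move=> s _; rewrite /= sum_eat.
- under eq_integral do rewrite sum_eat.
  rewrite integral_sum //; last exact: measurable_itv.
  under eq_bigr do rewrite slot_consumption_integral ?ler01 // slot_consumption1.
  by rewrite sumEFin a_row.
Qed.

Lemma slot_SG_run : SG_run q slot_speed pi slot_consumption.
Proof.
move=> i j; split.
  apply: (eq_integrable _ _ _ _ (integrable_scaled_indic_itv (eat_rate i j) _ _ 1)).
    exact: measurable_itv.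
  by move=> s _; rewrite slot_speed_receives.
move=> t; rewrite in_itv /= => /andP[t_ge0 _].
rewrite -slot_consumption_integral //; apply: eq_integral => s _.
by rewrite slot_speed_receives.
Qed.

End LayeredSchedule.

Theorem theorem6 (R : realType) (n m : nat)
    (q : 'I_m -> R) (r : 'I_n -> R)
    (hq : forall j, 0 < q j) (hr : forall i, 0 < r i)
    (hsum : \sum_(j < m) q j = \sum_(i < n) r i)
    (pi : 'I_n -> {perm 'I_m}) (a : 'I_n -> 'I_m -> R)
    (ha : pareto_efficient q r pi a) :
  exists eta : 'I_n -> R -> R,
    (forall i, speed_function (r i) (eta i)) /\ SG_outcome q eta pi a.
Proof.
have [a_alloc _] := ha.
have L_lt := upgrade_layer_lt pi a.
have L_upgrade := upgrade_layer_decreasing pi a ha.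
exists (slot_speed m.+1 a (upgrade_layer pi a)); split=> [i|].
  by apply: slot_speed_function => //; exact: a_alloc.
exists (slot_consumption m.+1 a (upgrade_layer pi a)); split=> [|i j].
  by apply: slot_SG_run => //; exact: a_alloc.
by rewrite slot_consumption1.
Qed.
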